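(* Let $X$, $Y$, $Y'$ be nonempty sets, let $F\colon X^*\to Y$ be a preassociative standard function and let $g\colon Y\to Y'$ be a function such that $g|_{\mathrm{ran}(F^{\flat})}$ is one-to-one. Let $\mathbf{a}\in Y'\setminus\mathrm{ran}(g|_{\mathrm{ran}(F^{\flat})})$ and define $H\colon X^*\to Y'$ by $H(\varepsilon)=\mathbf{a}$ and $H^{\flat}=g\circ F^{\flat}$. Then $H$ is standard and preassociative.
   Context: For a nonempty set $X$, $X^*=\bigcup_{n\geqslant 0}X^n$ is the set of all finite tuples over $X$, with $X^0=\{\varepsilon\}$, $\varepsilon$ the empty tuple. For tuples $\mathbf{x},\mathbf{y}$, $F(\mathbf{x},\mathbf{y})$ denotes $F$ applied to the concatenation (concatenation with $\varepsilon$ leaves a tuple unchanged). For $F\colon X^*\to Y$, $F^{\flat}=F|_{X^*\setminus\{\varepsilon\}}$. $F$ is standard if $F(\mathbf{x})=F(\varepsilon)$ holds only if $\mathbf{x}=\varepsilon$. $F$ is preassociative if for all $\mathbf{x},\mathbf{y},\mathbf{y}',\mathbf{z}\in X^*$, $F(\mathbf{y})=F(\mathbf{y}')$ implies $F(\mathbf{x},\mathbf{y},\mathbf{z})=F(\mathbf{x},\mathbf{y}',\mathbf{z})$. *)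

(* Tuples over X are modelled as lists: X^* = list X,
   the empty tuple epsilon = nil, concatenation = app. *)
From Stdlib Require Import List.
Import ListNotations.

Definition standard {X Y : Type} (F : list X -> Y) : Prop :=
  forall x : list X, F x = F [] -> x = [].

Definition preassociative {X Y : Type} (F : list X -> Y) : Prop :=
  forall x y y' z : list X, F y = F y' -> F (x ++ y ++ z) = F (x ++ y' ++ z).

(* range of F^flat = F restricted to nonempty tuples *)
Definition ran_flat {X Y : Type} (F : list X -> Y) (y : Y) : Prop :=
  exists x : list X, x <> [] /\ F x = y.

(* H takes the value a only at the empty tuple, since a lies outside g(ran F^flat);
   so H is standard, and H y = H y' forces y, y' to be both empty or both nonempty.
   In the nonempty case injectivity of g on ran F^flat gives F y = F y', and
   preassociativity of F transfers to H because every concatenation x y z with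
   y nonempty is again nonempty. *)
From Stdlib Require Import List.
Import ListNotations.

Lemma app_middle_neq_nil {X : Type} (x y z : list X) :
  y <> [] -> x ++ y ++ z <> [].
Proof.
  intros Hy Hxyz.
  apply app_eq_nil in Hxyz as [_ Hyz].
  apply app_eq_nil in Hyz as [Hy0 _].
  contradiction.
Qed.

Lemma ran_flat_image {X Y : Type} (F : list X -> Y) (x : list X) :
  x <> [] -> ran_flat F (F x).
Proof. intros Hx. exists x. split; [exact Hx | reflexivity]. Qed.

Section Extension.

Variables (X Y Y' : Type) (F : list X -> Y) (g : Y -> Y') (a : Y') (H : list X -> Y').

Hypothesis H_nil : H [] = a.
Hypothesis H_flat : forall x : list X, x <> [] -> H x = g (F x).
Hypothesis a_notin_range : ~ (exists y : Y, ran_flat F y /\ g y = a).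

Lemma H_neq_a (x : list X) : x <> [] -> H x <> a.
Proof.
  intros Hx HxA.
  apply a_notin_range.
  exists (F x). split.
  - exact (ran_flat_image F x Hx).
  - rewrite <- H_flat by exact Hx. exact HxA.
Qed.

Lemma standard_extension : standard H.
Proof.
  intros x Hx.
  destruct x as [|u x]; [reflexivity|].
  exfalso. apply (H_neq_a (u :: x)); [discriminate|].
  rewrite Hx. exact H_nil.
Qed.

Hypothesis g_inj : forall y1 y2 : Y,
  ran_flat F y1 -> ran_flat F y2 -> g y1 = g y2 -> y1 = y2.

Lemma extension_eq_flat (y y' : list X) :
  y <> [] -> y' <> [] -> H y = H y' -> F y = F y'.
Proof.
  intros Hy Hy' E.
  rewrite !H_flat in E by assumption.
  apply g_inj; [apply ran_flat_image .. | exact E]; assumption.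
Qed.

Lemma preassociative_extension : preassociative F -> preassociative H.
Proof.
  intros HFpre x y y' z E.
  destruct y as [|u y].
  - assert (y' = []) as -> by (apply standard_extension; symmetry; exact E).
    reflexivity.
  - destruct y' as [|u' y'].
    + assert (u :: y = []) by (apply standard_extension; exact E). discriminate.
    + assert (HF : F (u :: y) = F (u' :: y'))
        by (apply extension_eq_flat; [discriminate | discriminate | exact E]).
      rewrite !H_flat by (apply app_middle_neq_nil; discriminate).
      f_equal. apply HFpre. exact HF.
Qed.

End Extension.

Theorem proposition3p5 (X Y Y' : Type)
  (hX : inhabited X) (hY : inhabited Y) (hY' : inhabited Y')
  (F : list X -> Y) (g : Y -> Y')
  (HFstd : standard F) (HFpre : preassociative F)
  (Hginj : forall y1 y2 : Y, ran_flat F y1 -> ran_flat F y2 -> g y1 = g y2 -> y1 = y2)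
  (a : Y') (Ha : ~ (exists y : Y, ran_flat F y /\ g y = a))
  (H : list X -> Y')
  (HH0 : H [] = a) (HHflat : forall x : list X, x <> [] -> H x = g (F x)) :
  standard H /\ preassociative H.
Proof.
  split.
  - exact (standard_extension X Y Y' F g a H HH0 HHflat Ha).
  - exact (preassociative_extension X Y Y' F g a H HH0 HHflat Ha Hginj HFpre).
Qed.
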